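(* Let $(\mathbf{x}^*,\mathbf{u}^* )$ be an optimal solution of problem (P), and let $\pi^*\in\mathbb{R}$ and $q_i$ ($i\in[N]$) be multipliers associated with it as described in the context. Then for each $i\in[N]$ and a.e. $t\in[0,T]$: $u_i^*(t)=1$ if $\pi^*-\pi(t)-\beta_i q_i(t)>0$; $u_i^*(t)=0$ if $\pi^*-\pi(t)-\beta_i q_i(t)<0$; $u_i^*(t)=\underline{u}_i(t)$ if $\pi^*-\pi(t)-\beta_i q_i(t)=0$ and $x_i^*(t)=L_i$; $u_i^*(t)=\overline{u}_i(t)$ if $\pi^*-\pi(t)-\beta_i q_i(t)=0$ and $x_i^*(t)=U_i$.
   Context: Data: integers $N\ge 1$, $T>0$, $E>0$, real constants $\alpha_i,\beta_i$, $L_i<U_i$, $x_{i0}$ ($i\in[N]:=\{1,\dots,N\}$), price $\pi:[0,T]\to\mathbb{R}$, ambient temperature $\hat{x}:[0,T]\to\mathbb{R}$ with $\hat{x}(t)>\max_iU_i$. Problem (P): over measurable $u_i:[0,T]\to[0,1]$, minimize $\int_0^T\pi(t)\sum_iu_i(t)dt$ subject to $\dot{x}_i=-\alpha_i(x_i-\hat{x}(t))-\beta_iu_i$ a.e., $x_i(0)=x_{i0}$; $\dot{x}_{N+1}=\sum_iu_i$, $x_{N+1}(0)=0$, $x_{N+1}(T)=E$; $L_i\le x_i(t)\le U_i$ for all $t$. Define $\overline{u}_i(t):=\frac{\alpha_i}{\beta_i}(\hat{x}(t)-U_i)$, $\underline{u}_i(t):=\frac{\alpha_i}{\beta_i}(\hat{x}(t)-L_i)$.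 Standing assumptions (A1): $L_i\le x_{i0}\le U_i$; $E\in[\overline{E},\underline{E})$, $\overline{E}:=\int_0^T\sum_i\max\{0,\overline{u}_i\}dt$, $\underline{E}:=\int_0^T\sum_i\min\{\underline{u}_i,1\}dt$; for all $i,t$: $-\alpha_i(L_i-\hat{x}(t))>0$ and $-\alpha_i(U_i-\hat{x}(t))-\beta_i<0$. (A2): $\pi,\hat{x}$ differentiable; $\pi$ not of form $Ae^{\alpha_it}+B$ on any subinterval of positive measure. Multipliers: a scalar $\pi^*$, absolutely continuous $p_i$, functions $q_i$ and positive Radon measures $\mu_i,\ell_i$ on $[0,T]$ with $\dot{p}_i=\alpha_iq_i$ a.e., $q_i(t)=p_i(t)+\mu_i([0,t))-\ell_i([0,t))$ for $t<T$, $q_i(T)=p_i(T)+\mu_i([0,T])-\ell_i([0,T])=0$, $\operatorname{supp}\ell_i\subset\{x_i^*=L_i\}$, $\operatorname{supp}\mu_i\subset\{x_i^*=U_i\}$, and for a.e. $t$ and all $u\in[0,1]^N$: $\sum_i(\pi^*-\pi(t)-\beta_iq_i(t))u_i^*(t)\ge\sum_i(\pi^*-\pi(t)-\beta_iq_i(t))u_i$. *)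

From HB Require Import structures.
From mathcomp Require Import all_boot all_order all_algebra.
From mathcomp Require Import all_classical all_reals all_analysis.
Set Implicit Arguments. Unset Strict Implicit. Unset Printing Implicit Defensive.
Import Order.TTheory GRing.Theory Num.Theory.
Import numFieldNormedType.Exports.
Local Open Scope classical_set_scope.
Local Open Scope ring_scope.

Section Defs.
Variable R : realType.

Definition leb : set (measurableTypeR R) -> \bar R := @lebesgue_measure R.

Definition abs_cont (a b : R) (f : R -> R) :=
  forall e : R, 0 < e -> exists2 d : R, 0 < d &
    forall (n : nat) (s t : nat -> R),
      (forall k, (k < n)%N -> a <= s k /\ s k <= t k /\ t k <= b) ->
      (forall k, (k.+1 < n)%N -> t k <= s k.+1) ->
      \sum_(k < n) (t k - s k) < d ->
      \sum_(k < n) `|f (t k) - f (s k)| < e.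

Definition differentiable_cc (a b : R) (f : R -> R) :=
  [/\ forall t, a < t < b -> derivable f t 1,
      cvg ((fun h : R => h^-1 * (f (a + h) - f a)) @ 0^'+) &
      cvg ((fun h : R => h^-1 * (f (b + h) - f b)) @ 0^'-)].

Definition msupp (m : set (measurableTypeR R) -> \bar R) : set R :=
  [set t | forall e : R, 0 < e -> (0 < m (ball t e))%E].

Variables (N : nat) (T E : R) (alpha beta L U x0 : 'I_N -> R) (pi xhat : R -> R).

Definition I0T : set R := `[0, T]%classic.

Definition uover (i : 'I_N) (t : R) : R := alpha i / beta i * (xhat t - U i).
Definition uunder (i : 'I_N) (t : R) : R := alpha i / beta i * (xhat t - L i).

Definition Eover : \bar R :=
  (\int[leb]_(t in I0T) (\sum_(i < N) Num.max 0 (uover i t))%:E)%E.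
Definition Eunder : \bar R :=
  (\int[leb]_(t in I0T) (\sum_(i < N) Num.min (uunder i t) 1)%:E)%E.

(* feasibility for problem (P): states x_1..x_N (x), x_{N+1} (y), controls u *)
Definition feasible (x : 'I_N -> R -> R) (y : R -> R) (u : 'I_N -> R -> R) :=
  [/\ (forall i, measurable_fun I0T (u i)),
      (forall i t, 0 <= t <= T -> 0 <= u i t <= 1),
      (forall i, [/\ abs_cont 0 T (x i), x i 0 = x0 i &
                 forall t, 0 <= t <= T -> L i <= x i t <= U i]),
      (forall i, {ae leb, forall t : R, I0T t ->
          is_derive t 1 (x i) (- alpha i * (x i t - xhat t) - beta i * u i t)})
      & [/\ abs_cont 0 T y, y 0 = 0, y T = E &
          {ae leb, forall t : R, I0T t -> is_derive t 1 y (\sum_(i < N) u i t)}]].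

Definition cost (u : 'I_N -> R -> R) : \bar R :=
  (\int[leb]_(t in I0T) (pi t * \sum_(i < N) u i t)%:E)%E.

Definition optimal (x : 'I_N -> R -> R) (y : R -> R) (u : 'I_N -> R -> R) :=
  feasible x y u /\
  forall x' y' u', feasible x' y' u' -> (cost u <= cost u')%E.

Definition multipliers (x u : 'I_N -> R -> R) (pistar : R) (p q : 'I_N -> R -> R)
  (mu l : 'I_N -> {finite_measure set (measurableTypeR R) -> \bar R}) :=
  [/\ (forall i, mu i (~` I0T) = 0%E /\ l i (~` I0T) = 0%E),
      (forall i, abs_cont 0 T (p i) /\
         {ae leb, forall t : R, I0T t -> is_derive t 1 (p i) (alpha i * q i t)}),
      (forall i t, 0 <= t < T ->
         ((q i t)%:E = (p i t)%:E + mu i [set s : R | (0 <= s < t)%R]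
                                   - l i [set s : R | (0 <= s < t)%R])%E),
      (forall i, q i T = 0 /\
         ((p i T)%:E + mu i I0T - l i I0T = 0)%E) /\
      (forall i, msupp (l i) `<=` [set t | x i t = L i] /\
                 msupp (mu i) `<=` [set t | x i t = U i]) &
      {ae leb, forall t : R, I0T t -> forall v : 'I_N -> R,
          (forall i, 0 <= v i <= 1) ->
          \sum_(i < N) (pistar - pi t - beta i * q i t) * v i <=
          \sum_(i < N) (pistar - pi t - beta i * q i t) * u i t}].

End Defs.

From HB Require Import structures.
From mathcomp Require Import all_boot all_order all_algebra.
From mathcomp Require Import all_classical all_reals all_analysis.
Set Implicit Arguments. Unset Strict Implicit. Unset Printing Implicit Defensive.
Import Order.TTheory GRing.Theory Num.Theory.
Import numFieldNormedType.Exports.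
Local Open Scope classical_set_scope.
Local Open Scope ring_scope.

(* The maximum condition is linear in each control u_i over [0,1], so
   maximizing in u_i alone forces u_i = 1 or u_i = 0 wherever its coefficient
   is nonzero. If the coefficient vanishes and x_i sits on a bound at an
   interior time t, then t is an extremum of x_i, so the right-hand side
   -alpha_i (x_i - xhat) - beta_i u_i of the dynamics vanishes there; solving
   for u_i gives uunder or uover. The endpoints 0 and T form a null set. *)

Lemma maximizer_coord (R : numDomainType) (I : finType) (P : R -> Prop)
    (w u : I -> R) :
  (forall j, P (u j)) ->
  (forall v, (forall j, P (v j)) -> \sum_j w j * v j <= \sum_j w j * u j) ->
  forall i a, P a -> w i * a <= w i * u i.
Proof.
move=> Pu umax i a Pa.
pose v j := if j == i then a else u j.
have Pv j : P (v j) by rewrite /v; case: eqP.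
have := umax v Pv; rewrite [X in X <= _](bigD1 i) // [X in _ <= X](bigD1 i) //=.
rewrite /v eqxx (eq_bigr (fun j => w j * u j)) ?lerD2r //; by move=> j /negbTE ->.
Qed.

Lemma bang_bang (R : realDomainType) (c u : R) : 0 <= u <= 1 ->
  (forall a, 0 <= a <= 1 -> c * a <= c * u) -> (0 < c -> u = 1) /\ (c < 0 -> u = 0).
Proof.
case/andP=> u_ge0 u_le1 umax; split=> [c_gt0|c_lt0]; apply/eqP; rewrite eq_le.
- by rewrite u_le1 -(ler_pM2l c_gt0) umax // ler01 lexx.
- by rewrite u_ge0 -(ler_nM2l c_lt0) umax // lexx ler01.
Qed.

Lemma is_derive_local_min (R : realFieldType) (f : R -> R) (c d : R) :
  is_derive c 1 f d -> (\forall t \near c, f c <= f t) -> d = 0.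
Proof.
move=> [fc <-] /nbhs0P fmin.
have incr_ge0 : \forall h \near 0, 0 <= f (c + h) - f c.
  by apply: filterS fmin => h; rewrite subr_ge0.
apply/eqP; rewrite eq_le; apply/andP; split.
- apply: (cvgr_to_le (cvg_dnbhs_at_left fc)); near=> h.
  rewrite /= [_%:A]mulr1 (addrC h c); apply: mulr_le0_ge0.
    by rewrite invr_le0 ltW//; near: h; exact: nbhs_left_lt.
  by near: h; rewrite near_withinE; apply: filterS incr_ge0.
- apply: (cvgr_to_ge (cvg_dnbhs_at_right fc)); near=> h.
  rewrite /= [_%:A]mulr1 (addrC h c); apply: mulr_ge0.
    by rewrite invr_ge0 ltW//; near: h; exact: nbhs_right_gt.
  by near: h; rewrite near_withinE; apply: filterS incr_ge0.
Unshelve. all: by end_near. Qed.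

Lemma is_derive_local_max (R : realFieldType) (f : R -> R) (c d : R) :
  is_derive c 1 f d -> (\forall t \near c, f t <= f c) -> d = 0.
Proof.
move=> fd fmax; apply/eqP; rewrite -oppr_eq0; apply/eqP.
apply: (is_derive_local_min (is_deriveN fd)).
by apply: filterS fmax => s; rewrite /= lerN2.
Qed.

Lemma is_derive_at_bound (R : realFieldType) (x : R -> R) (a b lo hi t d : R) :
  (forall s, a <= s <= b -> lo <= x s <= hi) -> t \in `]a, b[ ->
  is_derive t 1 x d -> x t = lo \/ x t = hi -> d = 0.
Proof.
move=> xb tab xd xt.
have near_xb : \forall s \near t, lo <= x s <= hi.
  apply: filterS (near_in_itvoo tab) => s.
  by rewrite in_itv /= => /andP[ltas ltsb]; rewrite xb // !ltW.
case: xt => [xlo|xhi].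
- by apply: (is_derive_local_min xd); apply: filterS near_xb => s /andP[+ _]; rewrite xlo.
- by apply: (is_derive_local_max xd); apply: filterS near_xb => s /andP[_ +]; rewrite xhi.
Qed.

Lemma equilibrium_control (R : fieldType) (a b xh l u : R) : b != 0 ->
  - a * (l - xh) - b * u = 0 -> u = a / b * (xh - l).
Proof.
move=> b_neq0 /eqP; rewrite subr_eq0 => /eqP balance.
by apply: (mulfI b_neq0); rewrite mulrA mulrCA divff // mulr1 -balance mulNr -mulrN opprB.
Qed.

Lemma lebesgue_ae_neq (R : realType) (a : R) :
  \forall t \ae (@lebesgue_measure R), t != a.
Proof.
have null_a : (@lebesgue_measure R).-negligible [set a].
  exact/negligibleP/lebesgue_measure_set1.
by apply: negligibleS null_a => t /= /negP/negbNE/eqP.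
Qed.

Theorem lemma1 (R : realType) (N : nat) (T E : R)
  (alpha beta L U x0 : 'I_N -> R) (pi xhat : R -> R)
  (HN : (1 <= N)%N) (HT : 0 < T) (HE : 0 < E)
  (HLU : forall i, L i < U i)
  (Hxhat : forall t : R, 0 <= t <= T -> forall i, U i < xhat t)
  (* (A1) *)
  (Hx0 : forall i, L i <= x0 i <= U i)
  (HEb : (Eover T alpha beta U xhat <= E%:E < Eunder T alpha beta L xhat)%E)
  (HL : forall i (t : R), 0 <= t <= T -> 0 < - alpha i * (L i - xhat t))
  (HU : forall i (t : R), 0 <= t <= T -> - alpha i * (U i - xhat t) - beta i < 0)
  (* (A2) *)
  (Hpi : differentiable_cc 0 T pi) (Hxh : differentiable_cc 0 T xhat)
  (Hpi_exp : forall i (A B a b : R), 0 <= a -> a < b -> b <= T ->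
      ~ (forall t, a <= t <= b -> pi t = A * expR (alpha i * t) + B))
  (* optimal solution *)
  (xs : 'I_N -> R -> R) (ys : R -> R) (us : 'I_N -> R -> R)
  (Hopt : optimal T E alpha beta L U x0 pi xhat xs ys us)
  (* multipliers *)
  (pistar : R) (p q : 'I_N -> R -> R)
  (mu l : 'I_N -> {finite_measure set (measurableTypeR R) -> \bar R})
  (Hmult : multipliers T alpha beta L U pi xs us pistar p q mu l) :
  forall i : 'I_N, {ae @leb R, forall t : R, I0T T t ->
    [/\ 0 < pistar - pi t - beta i * q i t -> us i t = 1,
        pistar - pi t - beta i * q i t < 0 -> us i t = 0,
        pistar - pi t - beta i * q i t = 0 -> xs i t = L i ->
          us i t = uunder alpha beta L xhat i t &
        pistar - pi t - beta i * q i t = 0 -> xs i t = U i ->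
          us i t = uover alpha beta U xhat i t]}.
Proof.
move=> i; case: Hopt => -[_ Hu01 Hx Hder _] _; case: Hmult => _ _ _ _ Hmax.
have [_ _ Hxb] := Hx i.
have ae_filter : Filter (nbhs (almost_everywhere (@leb R))).
  exact: ae_filter_ringOfSetsType.
near=> t => It.
have t0T : 0 <= t <= T by move: It; rewrite /I0T /= in_itv.
have tin : t \in `]0, T[.
  have t_neq0 : t != 0 by near: t; exact: lebesgue_ae_neq.
  have t_neqT : t != T by near: t; exact: lebesgue_ae_neq.
  by case/andP: t0T => t_ge0 t_leT; rewrite in_itv /= !lt_neqAle t_ge0 t_leT eq_sym t_neq0 t_neqT.
have hd : I0T T t -> is_derive t 1 (xs i)
    (- alpha i * (xs i t - xhat t) - beta i * us i t) by near: t; exact: Hder.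
have hmax : I0T T t -> forall v : 'I_N -> R, (forall i, 0 <= v i <= 1) ->
    \sum_(i < N) (pistar - pi t - beta i * q i t) * v i <=
    \sum_(i < N) (pistar - pi t - beta i * q i t) * us i t by near: t; exact: Hmax.
have [c_pos c_neg] := bang_bang (Hu01 i t t0T)
  (maximizer_coord (fun j => Hu01 j t t0T) (hmax It) i).
have state_eq0 := is_derive_at_bound Hxb tin (hd It).
split=> // _ xt.
- apply: equilibrium_control; last by rewrite -xt; apply: state_eq0; left.
  apply/negP => /eqP beta0; have := state_eq0 (or_introl xt).
  rewrite beta0 mul0r subr0 => balance.
  by have := HL i t t0T; rewrite -xt balance ltxx.
- apply: equilibrium_control; last by rewrite -xt; apply: state_eq0; right.
  apply/negP => /eqP beta0; have := state_eq0 (or_intror xt).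
  rewrite beta0 mul0r subr0 => balance.
  by have := HU i t t0T; rewrite beta0 subr0 -xt balance ltxx.
Unshelve. all: by end_near. Qed.
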